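(* Let $n=2^\ell$, and let $S=\{u_1,\dots,u_m\}\subseteq\mathbb{F}_2^d\setminus\{0\}$ be a set of $m$ distinct nonzero vectors. Let $h:\mathbb{F}_2^d\to\mathbb{F}_2^\ell$ be a uniformly random linear map. Fix $y\in\mathbb{F}_2^\ell$ and define $Z_y:=|\{i:h(u_i)=y\}|$, and let $\lambda:=m/n$. Then for every integer $r\ge0$, with $a:=\lceil\log(r+2)\rceil$, \[ \Pr[Z_y>r]\le\lambda^a\left(\prod_{j=0}^{a-1}(r+2-2^j)\right)^{-1}. \]
   Context: $\log$ denotes the base-$2$ logarithm. A uniformly random linear map is chosen uniformly among all linear maps $\mathbb{F}_2^d\to\mathbb{F}_2^\ell$. *)

From mathcomp Require Import all_boot all_order all_algebra.
Set Implicit Arguments. Unset Strict Implicit. Unset Printing Implicit Defensive.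
Import GRing.Theory Num.Theory.
Local Open Scope ring_scope.

(* F_2^d is modelled by row vectors 'rV['F_2]_d; a linear map
   F_2^d -> F_2^l is a matrix A : 'M['F_2]_(d, l) acting by u |-> u *m A
   (this is a bijection between matrices and linear maps, so the uniform
   distribution on matrices is the uniform distribution on linear maps). *)

Definition Zcount (d l : nat) (S : {set 'rV['F_2]_d}) (y : 'rV['F_2]_l)
  (A : 'M['F_2]_(d, l)) : nat :=
  #|[set u in S | u *m A == y]|.

Definition prob_lin (d l : nat) (E : pred 'M['F_2]_(d, l)) : rat :=
  (#|[set A | E A]|)%:R / (#|{: 'M['F_2]_(d, l)}|)%:R.

From mathcomp Require Import all_boot all_order all_algebra zify.
Set Implicit Arguments. Unset Strict Implicit. Unset Printing Implicit Defensive.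
Import GRing.Theory Num.Theory.
Local Open Scope ring_scope.

(* If Z_y > r, the vectors of S mapped to y are more than r nonzero vectors, so
   they contain at least prod_(j < a) (r + 2 - 2^j) ordered a-tuples of linearly
   independent vectors: the (j+1)-st vector only has to avoid the span of the
   first j, which has 2^j - 1 nonzero elements.  Such a tuple is a free a-frame V
   of S (an a x d matrix of full row rank with rows in S) with V h = (y, ..., y).
   A fixed free frame satisfies this for exactly a 2^(-a l) fraction of the maps
   h, and S has at most |S|^a frames; counting the pairs (h, V) both ways gives
   Pr[Z_y > r] * prod_(j < a) (r + 2 - 2^j) <= |S|^a 2^(-a l) = lambda^a. *)

Section Frames.
Variables (F : finFieldType) (d : nat).
Implicit Types (T : {set 'rV[F]_d}) (k : nat).

Lemma card_rowspan_le k (V : 'M[F]_(k, d)) :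
  (#|[set u : 'rV[F]_d | (u <= V)%MS]| <= #|F| ^ k)%N.
Proof.
have -> : [set u : 'rV[F]_d | (u <= V)%MS] = [set v *m V | v : 'rV[F]_k].
  by apply/setP => u; rewrite inE; apply/submxP/imsetP => [[v ->]|[v _ ->]]; exists v.
by apply: leq_trans (leq_imset_card _ _) _; rewrite card_mx mul1n.
Qed.

Lemma card_setI_rowspan_lt T k (V : 'M[F]_(k, d)) :
  0 \notin T -> (#|T :&: [set u | (u <= V)%MS]| < #|F| ^ k)%N.
Proof.
move=> T0; apply: leq_trans _ (card_rowspan_le V); apply: proper_card.
rewrite properEneq subsetIr andbT; apply: contraNneq T0 => spanT.
by have /setIP[] : 0 \in T :&: [set u | (u <= V)%MS] by rewrite spanT inE sub0mx.
Qed.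

Lemma row_free_col_mx1 k (u : 'rV[F]_d) (V : 'M[F]_(k, d)) :
  row_free (col_mx u V) = ~~ (u <= V)%MS && row_free V.
Proof.
have := mxrank_sum_cap u V; rewrite addsmxE.
have := ltn_leqif (mxrank_leqif_sup (capmxSl u V)); rewrite sub_capmx submx_refl /=.
have := rank_leq_row u; have := rank_leq_row V.
rewrite /row_free; lia.
Qed.

Definition free_frames k T :=
  [set V : 'M[F]_(k, d) | row_free V && [forall i, row i V \in T]].

Lemma free_frames_col_mx k T (u : 'rV[F]_d) (V : 'M[F]_(k, d)) :
  (col_mx u V \in free_frames (1 + k) T) =
    [&& u \in T, ~~ (u <= V)%MS & V \in free_frames k T].
Proof.
have rowsE : [forall i, row i (col_mx u V) \in T] = (u \in T) && [forall i, row i V \in T].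
  apply/forallP/andP => [rowsT | [uT /forallP rowsT] i].
    split; last by apply/forallP => i; have := rowsT (rshift 1 i); rewrite rowKd.
    by have := rowsT (lshift k 0); rewrite rowKu row_id.
  by rewrite -(splitK i); case: (split i) => j /=; rewrite ?rowKu ?row_id ?rowKd ?rowsT.
by rewrite !inE row_free_col_mx1 rowsE -!andbA; case: (u \in T); rewrite /= ?andbF.
Qed.

Lemma card_free_framesS k T :
  #|free_frames (1 + k) T| =
    (\sum_(V in free_frames k T) #|T :\: [set u | (u <= V)%MS]|)%N.
Proof.
rewrite -sum1_card (partition_big dsubmx (mem (free_frames k T))) /= => [|W]; last first.
  by rewrite -[W]vsubmxK free_frames_col_mx col_mxKd => /and3P[].
apply: eq_bigr => V VF; rewrite (reindex (col_mx^~ V)) /=; last first.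
  exists usubmx => [u _|W /andP[_ /eqP <-]]; [exact: col_mxKu | exact: vsubmxK].
rewrite -sum1_card; apply: eq_bigl => u.
by rewrite free_frames_col_mx col_mxKd eqxx VF !inE !andbT andbC.
Qed.

Lemma card_free_frames_ge k T : 0 \notin T ->
  (\prod_(j < k) (#|T|.+1 - #|F| ^ j) <= #|free_frames k T|)%N.
Proof.
move=> T0; elim: k => [|k IHk].
  rewrite big_ord0 card_gt0; apply/set0Pn; exists 0.
  by rewrite inE /row_free mxrank0 eqxx; apply/forallP => -[].
rewrite big_ord_recr /= card_free_framesS.
apply: leq_trans (_ : \sum_(V in free_frames k T) (#|T|.+1 - #|F| ^ k) <= _)%N.
  by rewrite sum_nat_const leq_mul2r IHk orbT.
apply: leq_sum => V _; rewrite cardsD -[(#|T| - _)%N]subSS; exact/leq_sub2l/card_setI_rowspan_lt.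
Qed.

Lemma card_free_frames_le k T : (#|free_frames k T| <= #|T| ^ k)%N.
Proof.
pose rows (V : 'M[F]_(k, d)) := [ffun i => row i V].
have rows_inj : injective rows.
  by move=> V1 V2 /ffunP eqV; apply/row_matrixP => i; have := eqV i; rewrite !ffunE.
rewrite -(card_imset _ rows_inj) -[k in (_ <= _ ^ k)%N]card_ord -card_ffun_on.
apply/subset_leq_card/subsetP => _ /imsetP[V /setIdP[_ /forallP rowsT] ->].
by apply/ffun_onP => i; rewrite ffunE.
Qed.

Lemma card_mulmx_fibre a l (V : 'M[F]_(a, d)) (Y : 'M[F]_(a, l)) : row_free V ->
  (#|[set A | V *m A == Y]| * #|F| ^ (a * l) = #|F| ^ (d * l))%N.
Proof.
case/row_freeP => W VW.
pose fibre Y' := [set A : 'M[F]_(d, l) | V *m A == Y'].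
have card_fibre Y' : #|fibre Y'| = #|fibre Y|.
  have -> : fibre Y' = [set A + W *m (Y' - Y) | A in fibre Y].
    apply/setP => A; rewrite inE; apply/eqP/imsetP => [VA | [B]].
      exists (A - W *m (Y' - Y)); last by rewrite subrK.
      by rewrite inE mulmxBr mulmxA VW mul1mx VA subKr.
    by rewrite inE => /eqP VB ->; rewrite mulmxDr mulmxA VW mul1mx VB addrC subrK.
  by rewrite card_imset //; apply: addIr.
rewrite -!card_mx mulnC -sum_nat_const.
under eq_bigr => Y' _ do rewrite -(card_fibre Y').
rewrite -[in RHS]sum1_card (partition_big (mulmx V) xpredT) //=.
by apply: eq_bigr => Y' _; rewrite sum1dep_card.
Qed.

Lemma free_frames_fibre l k T (A : 'M[F]_(d, l)) (y : 'rV[F]_l) :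
  free_frames k [set u in T | u *m A == y] =
    [set V in free_frames k T | V *m A == \matrix_(i < k) y].
Proof.
apply/setP => V; rewrite !inE -andbA; congr (_ && _).
apply/forallP/andP => [rowsTy | [/forallP rowsT /eqP VA] i].
  split; first by apply/forallP => i; have /setIdP[] := rowsTy i.
  by apply/eqP/row_matrixP => i; rewrite row_mul rowK; have /setIdP[_ /eqP] := rowsTy i.
by rewrite inE rowsT -row_mul VA rowK eqxx.
Qed.

Lemma card_large_fibres l (S : {set 'rV[F]_d}) (y : 'rV[F]_l) r a : 0 \notin S ->
  (#|[set A : 'M[F]_(d, l) | r < #|[set u in S | u *m A == y]|]|
     * \prod_(j < a) (r.+2 - #|F| ^ j) * #|F| ^ (a * l)
   <= #|S| ^ a * #|F| ^ (d * l))%N.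
Proof.
move=> S0; set G := free_frames a S; pose Y := \matrix_(i < a) y.
pose pairs := (\sum_(A : 'M[F]_(d, l)) #|[set V in G | V *m A == Y]|)%N.
have pairs_ge : (#|[set A | r < #|[set u in S | u *m A == y]|]|
                 * \prod_(j < a) (r.+2 - #|F| ^ j) <= pairs)%N.
  rewrite -sum_nat_const big_mkcond; apply: leq_sum => A _.
  rewrite inE; case: ifP => // large.
  rewrite -free_frames_fibre.
  apply: leq_trans (_ : \prod_(j < a) (#|[set u in S | u *m A == y]|.+1 - #|F| ^ j) <= _)%N.
    by apply: leq_prod => j _; apply: leq_sub2r.
  by apply: card_free_frames_ge; rewrite inE (negbTE S0).
have pairsE : (pairs * #|F| ^ (a * l) = #|G| * #|F| ^ (d * l))%N.
  rewrite /pairs; under eq_bigr do rewrite -sum1dep_card.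
  rewrite (exchange_big_dep (mem G)) /= => [|A V _ /andP[] //].
  rewrite big_distrl /= -sum_nat_const; apply: eq_bigr => V VG.
  have /setIdP[V_free _] := VG.
  rewrite -(card_mulmx_fibre Y V_free) sum1dep_card.
  by congr (_ * _)%N; apply: eq_card => A; rewrite inE VG inE.
apply: leq_trans (leq_mul pairs_ge (leqnn _)) _.
by rewrite pairsE leq_mul2r card_free_frames_le orbT.
Qed.

End Frames.

Theorem theoremB1 (d l : nat) (S : {set 'rV['F_2]_d}) (y : 'rV['F_2]_l) (r : nat) :
  0 \notin S ->
  prob_lin (fun A => (r < Zcount S y A)%N)
  <= ((#|S|)%:R / (2 ^ l)%:R) ^+ (up_log 2 (r + 2))
     / \prod_(j < up_log 2 (r + 2)) ((r + 2)%:R - (2 ^ j)%:R : rat).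
Proof.
move=> S0; set a := up_log 2 (r + 2).
have pow_lt j : (j < a)%N -> (2 ^ j < r.+2)%N.
  move=> ja; rewrite ltnNge; apply: contraTN ja => /(up_log_min (ltnSn 1)).
  by rewrite -leqNgt /a addn2.
have card_F2 : #|'F_2| = 2%N by rewrite card_Fp.
have prodE : \prod_(j < a) ((r + 2)%:R - (2 ^ j)%:R : rat) = (\prod_(j < a) (r.+2 - 2 ^ j))%:R.
  by rewrite natr_prod; apply: eq_bigr => j _; rewrite addn2 natrB // ltnW ?pow_lt.
have prod_gt0 : (0 < \prod_(j < a) (r.+2 - 2 ^ j))%N.
  by rewrite prodn_gt0 // => j; rewrite subn_gt0 pow_lt.
have := card_large_fibres y r a S0; rewrite card_F2 => count_le.
rewrite /prob_lin card_mx card_F2 expr_div_n -!natrX -expnM prodE.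
rewrite ler_pdivlMr ?ltr0n // ler_pdivlMr ?ltr0n ?expn_gt0 //.
rewrite -!mulrA mulrCA ler_pdivrMl ?ltr0n ?expn_gt0 // -!natrM ler_nat.
by rewrite mulnA [(l * a)%N]mulnC [X in (_ <= X)%N]mulnC; exact: count_le.
Qed.
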